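(* Let $H\le\mathrm{GL}_n(q)$ and suppose that, in a suitable basis of $V=\mathbb{F}_q^n$, every $g\in H$ has the block upper-triangular form $$\begin{pmatrix} g_k & g_{k,k-1} & \cdots & g_{k,1}\\ 0 & g_{k-1} & \cdots & g_{k-1,1}\\ \vdots & & \ddots & \vdots\\ 0 & 0 & \cdots & g_1\end{pmatrix},$$ where each $\gamma_i:H\to\mathrm{GL}_{n_i}(q)$, $g\mapsto g_i$, is an irreducible representation, $g_{i,j}$ is an $n_i\times n_j$ matrix and $n_1+\dots+n_k=n$; put $H_i=\gamma_i(H)$. If for every $i$ there exists $x_i\in\mathrm{GL}_{n_i}(q)$ (respectively $x_i\in\mathrm{SL}_{n_i}(q)$) such that $H_i\cap H_i^{x_i}$ consists of upper triangular matrices, then there exist $x,y\in\mathrm{GL}_n(q)$ (respectively $x,y\in\mathrm{SL}_n(q)$) such that $(H\cap H^x)\cap(H\cap H^x)^y\le D(\mathrm{GL}_n(q))$.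
   Context: $D(\mathrm{GL}_n(q))$ is the group of diagonal matrices (in the chosen basis); $H^x=x^{-1}Hx$. *)

From HB Require Import structures.
From mathcomp Require Import all_boot all_order all_algebra all_fingroup all_field.
Set Implicit Arguments. Unset Strict Implicit. Unset Printing Implicit Defensive.
Import GRing.Theory.
Local Open Scope ring_scope.

Section Defs.
Variable F : finFieldType.

Definition inGL (sl : bool) m (x : 'M[F]_m) : bool :=
  (x \in unitmx) && (sl ==> (\det x == 1)).

Definition conjset m (H : {set 'M[F]_m}) (x : 'M[F]_m) : {set 'M[F]_m} :=
  [set invmx x *m h *m x | h in H].

(* H is a subgroup of GL_m(F) (finite, so closure under inverses follows) *)
Definition is_matgroup m (H : {set 'M[F]_m}) : Prop :=
  [/\ 1%:M \in H, (forall g h, g \in H -> h \in H -> g *m h \in H)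
    & (forall g, g \in H -> g \in unitmx)].

Definition upper_triangular m (A : 'M[F]_m) : Prop :=
  forall i j : 'I_m, (j < i)%N -> A i j = 0.

Definition diagonal m (A : 'M[F]_m) : Prop :=
  forall i j : 'I_m, i != j -> A i j = 0.

(* A subspace is given as the row space of U (rows = the column vectors). *)
Definition irreducible_set m (S : {set 'M[F]_m}) : Prop :=
  (0 < m)%N /\
  forall U : 'M[F]_m,
    (forall g, g \in S -> (U *m g^T <= U)%MS) -> (U == 0) || row_full U.

Section Blocks.
Variables (k : nat) (s : 'I_k -> nat).
Notation N := (\sum_(i < k) s i)%N.

(* Block upper triangular w.r.t. the decomposition N = s 0 + ... + s (k-1),
   block 0 being the top-left one: blocks strictly below the diagonal vanish. *)
Definition block_upper (g : 'M[F]_N) : Prop :=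
  forall i j : 'I_k, (j < i)%N -> @submxblock F k k s s g i j = 0.

Definition gamma (i : 'I_k) (g : 'M[F]_N) : 'M[F]_(s i) :=
  @submxblock F k k s s g i i.

Definition Hblock (H : {set 'M[F]_N}) (i : 'I_k) : {set 'M[F]_(s i)} :=
  [set gamma i g | g in H].
End Blocks.
End Defs.

From HB Require Import structures.
From mathcomp Require Import all_boot all_order all_algebra all_fingroup all_field.
Set Implicit Arguments. Unset Strict Implicit. Unset Printing Implicit Defensive.
Import GRing.Theory.
Local Open Scope ring_scope.

(* Put x = diag(x_1, ..., x_k).  Conjugation by a block-diagonal matrix acts
   blockwise on the diagonal blocks, so every a in H meet H^x has diagonal
   blocks in H_i meet H_i^(x_i), which are upper triangular; being block upper
   triangular as well, a is upper triangular.  For the Borel subgroup B of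
   upper triangular matrices, B meet B^y = D when y is the antidiagonal
   permutation matrix (rescaled to have determinant 1). *)

Lemma det_castmx (R : comPzRingType) m n (e : m = n) (A : 'M[R]_m) :
  \det (castmx (e, e) A) = \det A.
Proof. by case: n / e; rewrite castmx_id. Qed.

Lemma det_mxdiag (R : comPzRingType) k (s : 'I_k -> nat)
    (B : forall i, 'M[R]_(s i)) :
  \det (mxdiag B) = \prod_i \det (B i).
Proof.
elim: k s B => [|k IHk] s B.
  rewrite [RHS]big_ord0; move: (mxdiag B); rewrite big_ord0 => A.
  exact: det_mx00.
rewrite mxdiag_recl [RHS]big_ord_recl -IHk -(det_ublock _ 0).
exact: det_castmx.
Qed.

Section Blocks.
Variables (F : finFieldType) (k : nat) (s : 'I_k -> nat).
Notation N := (\sum_(i < k) s i)%N.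

Lemma inGL_mxdiag sl (B : forall i, 'M[F]_(s i)) :
  (forall i, inGL sl (B i)) -> inGL sl (mxdiag B).
Proof.
move=> inGL_B; rewrite /inGL unitmxE det_mxdiag; apply/andP; split.
  by rewrite unitr_prod // => i _; case/andP: (inGL_B i); rewrite unitmxE.
apply/implyP => /= sl1; rewrite big1 // => i _.
by case/andP: (inGL_B i) => _; rewrite sl1 => /eqP.
Qed.

Lemma upper_triangular_trmx m (A : 'M[F]_m) :
  upper_triangular A <-> is_trig_mx A^T.
Proof.
split=> [upA | /is_trig_mxP lowAT i j lt_ji].
  by apply/is_trig_mxP => i j lt_ij; rewrite mxE upA.
by have := lowAT j i lt_ji; rewrite mxE.
Qed.

Lemma block_upper_upper_triangular (a : 'M[F]_N) :
  block_upper a -> (forall i, upper_triangular (gamma i a)) ->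
  upper_triangular a.
Proof.
move=> up_a up_diag; apply/upper_triangular_trmx.
rewrite -[a](@submxblockK _ _ _ s s) tr_mxblock.
apply/is_trig_mxblockP; split=> [i j lt_ij | i].
  by rewrite up_a // trmx0.
exact/upper_triangular_trmx/up_diag.
Qed.

Lemma gamma_conj_mxdiag (B : forall i, 'M[F]_(s i)) (a h : 'M[F]_N) i :
  mxdiag B \in unitmx -> B i \in unitmx ->
  a = invmx (mxdiag B) *m h *m mxdiag B ->
  gamma i a = invmx (B i) *m gamma i h *m B i.
Proof.
move=> unitX unitBi def_a.
have /(congr1 (fun M => @submxblock _ _ _ s s M i i)) :
    mxdiag B *m mxblock (@submxblock _ _ _ s s a) =
    mxblock (@submxblock _ _ _ s s h) *m mxdiag B.
  by rewrite !submxblockK def_a !mulmxA mulmxV // mul1mx.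
rewrite mul_mxdiag_mxblock mul_mxblock_mxdiag !mxblockK.
move=> /(congr1 (mulmx (invmx (B i)))).
by rewrite mulmxA mulVmx // mul1mx mulmxA.
Qed.

Lemma conjset_mxdiag_upper_triangular (H : {set 'M[F]_N})
    (B : forall i, 'M[F]_(s i)) :
  (forall g, g \in H -> block_upper g) -> (forall i, B i \in unitmx) ->
  (forall i a, a \in Hblock H i :&: conjset (Hblock H i) (B i) ->
     upper_triangular a) ->
  forall a, a \in H :&: conjset H (mxdiag B) -> upper_triangular a.
Proof.
move=> H_up unitB up_Hi a /setIP[aH /imsetP[h hH def_a]].
have unitX : mxdiag B \in unitmx.
  by rewrite unitmxE det_mxdiag unitr_prod // => i _; rewrite -unitmxE.
apply: block_upper_upper_triangular (H_up a aH) _ => i.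
apply: up_Hi; rewrite inE imset_f //=.
apply/imsetP; exists (gamma i h); first exact: imset_f.
exact: gamma_conj_mxdiag def_a.
Qed.

End Blocks.

Section LongestElement.
Variable F : finFieldType.

Definition rev_perm n : 'S_n := perm (@rev_ord_inj n).

Lemma rev_permE n i : rev_perm n i = rev_ord i.
Proof. exact: permE. Qed.

Lemma rev_permK n : involutive (rev_perm n).
Proof. by move=> i; rewrite !rev_permE rev_ordK. Qed.

Lemma rev_permV n : ((rev_perm n)^-1)%g = rev_perm n.
Proof. by apply/permP => i; rewrite -{1}[i]rev_permK permK. Qed.

(* The sign in the first entry makes the determinant 1. *)
Definition rev_sl_diag n : 'rV[F]_n :=
  \row_i (if val i == 0%N then (-1) ^+ rev_perm n else 1).

Definition rev_sl_mx n : 'M[F]_n :=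
  perm_mx (rev_perm n) *m diag_mx (rev_sl_diag n).

Lemma rev_sl_diag_neq0 n i : rev_sl_diag n 0 i != 0.
Proof. by rewrite mxE; case: ifP; rewrite ?signr_eq0 ?oner_eq0. Qed.

Lemma det_rev_sl_mx n : \det (rev_sl_mx n) = 1.
Proof.
case: n => [|n]; first exact: det_mx00.
rewrite det_mulmx det_perm det_diag big_ord_recl big1 => [|i _]; last by rewrite mxE.
by rewrite mxE /= mulr1 -signr_addb addbb.
Qed.

Lemma rev_sl_mx_inGL sl n : inGL sl (rev_sl_mx n).
Proof. by rewrite /inGL unitmxE det_rev_sl_mx unitr1 eqxx implybT. Qed.

Lemma mul_rev_sl_mx_l n (A : 'M[F]_n) i j :
  (rev_sl_mx n *m A) i j =
  rev_sl_diag n 0 (rev_perm n i) * A (rev_perm n i) j.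
Proof. by rewrite -mulmxA -row_permE mxE mul_diag_mx mxE. Qed.

Lemma mul_rev_sl_mx_r n (A : 'M[F]_n) i j :
  (A *m rev_sl_mx n) i j = A i (rev_perm n j) * rev_sl_diag n 0 j.
Proof.
by rewrite mulmxA -[X in perm_mx X]invgK -col_permE mul_mx_diag !mxE rev_permV.
Qed.

Lemma rev_sl_mx_conj_upper_diagonal n (a b : 'M[F]_n) :
  upper_triangular a -> upper_triangular b ->
  a = invmx (rev_sl_mx n) *m b *m rev_sl_mx n -> diagonal a.
Proof.
move=> up_a up_b def_a i j ne_ij.
have [lt_ij | lt_ji | /val_inj eq_ij] := ltngtP i j; last first.
- by rewrite eq_ij eqxx in ne_ij.
- exact: up_a.
have unit_y : rev_sl_mx n \in unitmx by rewrite unitmxE det_rev_sl_mx unitr1.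
have /matrixP/(_ (rev_perm n i) j) : rev_sl_mx n *m a = b *m rev_sl_mx n.
  by rewrite def_a !mulmxA mulmxV // mul1mx.
rewrite mul_rev_sl_mx_l mul_rev_sl_mx_r rev_permK.
have lt_rev : (rev_ord j < rev_ord i)%N.
  by apply: ltn_sub2l; [exact: leq_ltn_trans lt_ij (ltn_ord j) | rewrite ltnS].
rewrite up_b ?rev_permE // mul0r => /eqP.
by rewrite mulf_eq0 (negPf (rev_sl_diag_neq0 _)) => /eqP.
Qed.

End LongestElement.

Theorem mainTheorem10 (F : finFieldType) (sl : bool) (k : nat) (s : 'I_k -> nat)
    (H : {set 'M[F]_(\sum_(i < k) s i)}) :
  is_matgroup H ->
  (forall g, g \in H -> block_upper g) ->
  (forall i : 'I_k, irreducible_set (Hblock H i)) ->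
  (forall i : 'I_k, exists2 xi : 'M[F]_(s i), inGL sl xi &
     forall a, a \in Hblock H i :&: conjset (Hblock H i) xi -> upper_triangular a) ->
  exists x : 'M[F]_(\sum_(i < k) s i), exists y : 'M[F]_(\sum_(i < k) s i),
    [/\ inGL sl x, inGL sl y &
      forall a, a \in (H :&: conjset H x) :&: conjset (H :&: conjset H x) y ->
        diagonal a].
Proof.
move=> _ H_up _ /fin_all_exists2[xs inGL_xs up_xs].
have unit_xs i : xs i \in unitmx by case/andP: (inGL_xs i).
have up_K := conjset_mxdiag_upper_triangular H_up unit_xs up_xs.
exists (mxdiag xs), (rev_sl_mx F _); split.
- exact: inGL_mxdiag.
- exact: rev_sl_mx_inGL.
move=> a /setIP[aK /imsetP[b bK def_a]].
exact: rev_sl_mx_conj_upper_diagonal (up_K a aK) (up_K b bK) def_a.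
Qed.
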